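(* Let $\mathbf{w},\mathbf{v}\in\mathbb{R}^d$ be nonzero with $\theta_{\mathbf{w},\mathbf{v}}\in(0,\pi)$, and let \[ h_1(\mathbf{w},\mathbf{v})=\frac{\sin(\theta_{\mathbf{w},\mathbf{v}})\|\mathbf{v}\|}{2\pi\|\mathbf{w}\|}\left(I-\bar{\mathbf{w}}\bar{\mathbf{w}}^\top+\bar{\mathbf{n}}_{\mathbf{v},\mathbf{w}}\bar{\mathbf{n}}_{\mathbf{v},\mathbf{w}}^\top\right),\qquad h_2(\mathbf{w},\mathbf{v})=\frac{1}{2\pi}\left((\pi-\theta_{\mathbf{w},\mathbf{v}})I+\bar{\mathbf{n}}_{\mathbf{w},\mathbf{v}}\bar{\mathbf{v}}^\top+\bar{\mathbf{n}}_{\mathbf{v},\mathbf{w}}\bar{\mathbf{w}}^\top\right). \] Then $\|h_1(\mathbf{w},\mathbf{v})\|_{\mathrm{sp}}=\frac{\sin(\theta_{\mathbf{w},\mathbf{v}})\|\mathbf{v}\|}{\pi\|\mathbf{w}\|}$ and $\|h_2(\mathbf{w},\mathbf{v})\|_{\mathrm{sp}}=\frac{1}{2\pi}\left(\pi-\theta_{\mathbf{w},\mathbf{v}}+\sin(\theta_{\mathbf{w},\mathbf{v}})\right)$.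
   Context: Norms on vectors are Euclidean; $\|\cdot\|_{\mathrm{sp}}$ is the spectral norm. $\bar{\mathbf{w}}=\mathbf{w}/\|\mathbf{w}\|$; $\theta_{\mathbf{w},\mathbf{v}}=\arccos\left(\frac{\mathbf{w}^\top\mathbf{v}}{\|\mathbf{w}\|\|\mathbf{v}\|}\right)$; $\mathbf{n}_{\mathbf{v},\mathbf{w}}=\bar{\mathbf{v}}-\cos(\theta_{\mathbf{v},\mathbf{w}})\bar{\mathbf{w}}$ and $\bar{\mathbf{n}}_{\mathbf{v},\mathbf{w}}=\mathbf{n}_{\mathbf{v},\mathbf{w}}/\|\mathbf{n}_{\mathbf{v},\mathbf{w}}\|$ (similarly $\bar{\mathbf{n}}_{\mathbf{w},\mathbf{v}}$ with roles swapped). *)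

From HB Require Import structures.
From mathcomp Require Import all_boot all_order all_algebra.
From mathcomp Require Import all_classical all_reals all_analysis.
Set Implicit Arguments. Unset Strict Implicit. Unset Printing Implicit Defensive.
Import Order.TTheory GRing.Theory Num.Theory.
Local Open Scope ring_scope.
Local Open Scope classical_set_scope.

Section Defs.
Variables (R : realType) (d : nat).

Definition vdot (u v : 'cV[R]_d) : R := \sum_(i < d) u i 0 * v i 0.
Definition vnorm (u : 'cV[R]_d) : R := Num.sqrt (vdot u u).

Definition specnorm (A : 'M[R]_d) : R :=
  sup [set vnorm (A *m x) | x in [set x : 'cV[R]_d | vnorm x = 1]].

Definition vbar (w : 'cV[R]_d) : 'cV[R]_d := (vnorm w)^-1 *: w.

Definition vangle (w v : 'cV[R]_d) : R := acos (vdot w v / (vnorm w * vnorm v)).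

Definition nvec (v w : 'cV[R]_d) : 'cV[R]_d := vbar v - cos (vangle v w) *: vbar w.
Definition nbar (v w : 'cV[R]_d) : 'cV[R]_d := (vnorm (nvec v w))^-1 *: nvec v w.

Definition h1 (w v : 'cV[R]_d) : 'M[R]_d :=
  (sin (vangle w v) * vnorm v / (2 * pi * vnorm w)) *:
    (1%:M - vbar w *m (vbar w)^T + nbar v w *m (nbar v w)^T).

Definition h2 (w v : 'cV[R]_d) : 'M[R]_d :=
  (2 * pi)^-1 *:
    ((pi - vangle w v)%:M + nbar w v *m (vbar v)^T + nbar v w *m (vbar w)^T).

End Defs.

From HB Require Import structures.
From mathcomp Require Import all_boot all_order all_algebra.
From mathcomp Require Import all_classical all_reals all_analysis.
From mathcomp Require Import ring lra.
Import Order.TTheory GRing.Theory Num.Theory.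
Local Open Scope ring_scope.

(* Put a = w̄, b = n̄_{v,w}, c = cos θ, s = sin θ.  Then (a, b) is orthonormal,
   v̄ = c a + s b and n̄_{w,v} = s a - c b, so
     h1 = K (I - a aᵀ + b bᵀ),   h2 = k (m I + (s a - c b)(c a + s b)ᵀ + b aᵀ)
   with K = s‖v‖/(2π‖w‖), k = 1/(2π), m = π - θ.  The first matrix is the
   identity off span(a, b), kills a and doubles b: its norm is 2K.  For the
   second, with α = a·x and β = b·x,
     ‖h2 x‖²/k² = m²‖x‖² + 2ms Q(α, β) + s²(α² + β²),
   where Q is the quadratic form of the reflection [[c, s], [s, -c]]; as
   Q ≤ α² + β² ≤ ‖x‖² the norm is at most k(m + s), with equality on the unit
   vector cos(θ/2) a + sin(θ/2) b fixed by the reflection. *)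

Section InnerProduct.
Context {R : realType} {d : nat}.
Implicit Types (p u v x : 'cV[R]_d) (k : R).

Lemma vdotC u v : vdot u v = vdot v u.
Proof. by apply: eq_bigr => i _; rewrite mulrC. Qed.

Lemma vdotDl u v x : vdot (u + v) x = vdot u x + vdot v x.
Proof. by rewrite /vdot -big_split; apply: eq_bigr => i _; rewrite mxE mulrDl. Qed.

Lemma vdotZl k u x : vdot (k *: u) x = k * vdot u x.
Proof. by rewrite /vdot mulr_sumr; apply: eq_bigr => i _; rewrite mxE mulrA. Qed.

Lemma vdotNl u x : vdot (- u) x = - vdot u x.
Proof. by rewrite -scaleN1r vdotZl mulN1r. Qed.

Lemma vdotBl u v x : vdot (u - v) x = vdot u x - vdot v x.
Proof. by rewrite vdotDl vdotNl. Qed.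

Lemma vdotDr u v x : vdot x (u + v) = vdot x u + vdot x v.
Proof. by rewrite vdotC vdotDl !(vdotC x). Qed.

Lemma vdotZr k u x : vdot x (k *: u) = k * vdot x u.
Proof. by rewrite vdotC vdotZl vdotC. Qed.

Lemma vdotNr u x : vdot x (- u) = - vdot x u.
Proof. by rewrite vdotC vdotNl vdotC. Qed.

Lemma vdotBr u v x : vdot x (u - v) = vdot x u - vdot x v.
Proof. by rewrite vdotDr vdotNr. Qed.

Definition vdotE :=
  (vdotDl, vdotBl, vdotNl, vdotZl, vdotDr, vdotBr, vdotNr, vdotZr).

Lemma vdot_ge0 u : 0 <= vdot u u.
Proof. by apply: sumr_ge0 => i _; rewrite -expr2 sqr_ge0. Qed.

Lemma vdot_eq0 u : (vdot u u == 0) = (u == 0).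
Proof.
apply/idP/eqP => [|->]; last by rewrite /vdot big1 // => i _; rewrite mxE mulr0.
rewrite psumr_eq0 => [/allP u0|i _]; last by rewrite -expr2 sqr_ge0.
apply/matrixP => i j; rewrite ord1 mxE.
by have := u0 i (mem_index_enum _); rewrite -expr2 sqrf_eq0 => /eqP.
Qed.

Lemma vnorm_sqr u : vnorm u ^+ 2 = vdot u u.
Proof. by rewrite sqr_sqrtr // vdot_ge0. Qed.

Lemma vnorm_eq0 u : (vnorm u == 0) = (u == 0).
Proof. by rewrite sqrtr_eq0 -vdot_eq0 eq_le vdot_ge0 andbT. Qed.

Lemma vnorm_gt0 {u} : u != 0 -> 0 < vnorm u.
Proof. by move=> u0; rewrite lt_def vnorm_eq0 u0 sqrtr_ge0. Qed.

Lemma vdot_vbar {u} : u != 0 -> vdot (vbar u) (vbar u) = 1.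
Proof.
move=> u0; rewrite /vbar !vdotE -vnorm_sqr.
by field; rewrite gt_eqF // vnorm_gt0.
Qed.

Lemma vdot_sub_proj p x : vdot p p = 1 ->
  vdot (x - vdot p x *: p) (x - vdot p x *: p) = vdot x x - vdot p x ^+ 2.
Proof. by move=> pp; rewrite !vdotE pp (vdotC x p); ring. Qed.

Lemma vdot_proj_orth p x : vdot p p = 1 -> vdot p (x - vdot p x *: p) = 0.
Proof. by move=> pp; rewrite !vdotE pp; ring. Qed.

Lemma vdot_unit_sqr_le p x : vdot p p = 1 -> vdot p x ^+ 2 <= vdot x x.
Proof. by move=> pp; rewrite -subr_ge0 -vdot_sub_proj // vdot_ge0. Qed.

Lemma mulmx_outer u v x : u *m v^T *m x = vdot v x *: u.
Proof.
rewrite -mulmxA -mul_mx_scalar; congr (_ *m _).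
by apply/matrixP => i j; rewrite !ord1 !mxE; apply: eq_bigr => k _; rewrite !mxE.
Qed.

End InnerProduct.

Lemma specnorm_attained {R : realType} {d : nat} (A : 'M[R]_d) (x0 : 'cV_d) (B : R) :
  0 <= B -> vdot x0 x0 = 1 -> vdot (A *m x0) (A *m x0) = B ^+ 2 ->
  (forall x, vdot x x = 1 -> vdot (A *m x) (A *m x) <= B ^+ 2) ->
  specnorm A = B.
Proof.
move=> B_ge0 x0_unit Ax0 Ax_le; apply/le_anti/andP; split.
  apply: ge_sup => [|_ [x /= x_unit <-]].
    by exists (vnorm (A *m x0)), x0 => //=; rewrite /vnorm x0_unit sqrtr1.
  rewrite -(ger0_norm B_ge0) -sqrtr_sqr ler_sqrt ?sqr_ge0 // Ax_le //.
  by rewrite -vnorm_sqr x_unit expr1n.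
apply: ub_le_sup.
  exists B => _ [x /= x_unit <-]; rewrite -(ger0_norm B_ge0) -sqrtr_sqr.
  by rewrite ler_sqrt ?sqr_ge0 // Ax_le // -vnorm_sqr x_unit expr1n.
by exists x0; rewrite /= /vnorm ?x0_unit ?sqrtr1 // Ax0 sqrtr_sqr ger0_norm.
Qed.

Lemma reflection_form_le {R : realType} (c s p q : R) : c ^+ 2 + s ^+ 2 = 1 ->
  c * p ^+ 2 + 2 * s * p * q - c * q ^+ 2 <= p ^+ 2 + q ^+ 2.
Proof.
move=> cs1.
have sq_sum : (s * p - (1 + c) * q) ^+ 2 + ((1 - c) * p - s * q) ^+ 2
    = 2 * (p ^+ 2 + q ^+ 2 - (c * p ^+ 2 + 2 * s * p * q - c * q ^+ 2))
      + (c ^+ 2 + s ^+ 2 - 1) * (p ^+ 2 + q ^+ 2) by ring.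
rewrite cs1 subrr mul0r addr0 in sq_sum.
by have := sqr_ge0 (s * p - (1 + c) * q); have := sqr_ge0 ((1 - c) * p - s * q); lra.
Qed.

Section OrthonormalPair.
Context {R : realType} {d : nat}.
Context {a b : 'cV[R]_d}.
Hypotheses (a_unit : vdot a a = 1) (b_unit : vdot b b = 1) (ab_orth : vdot a b = 0).

Let ba_orth : vdot b a = 0. Proof. by rewrite vdotC. Qed.

Lemma bessel2 x : vdot a x ^+ 2 + vdot b x ^+ 2 <= vdot x x.
Proof.
have := vdot_ge0 (x - vdot a x *: a - vdot b x *: b).
by rewrite !vdotE a_unit b_unit ab_orth ba_orth (vdotC x a) (vdotC x b); nra.
Qed.

Lemma specnorm_frame1 (k : R) : 0 <= k ->
  specnorm (k *: (1%:M - a *m a^T + b *m b^T)) = 2 * k.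
Proof.
move=> k_ge0.
have Ax x : k *: (1%:M - a *m a^T + b *m b^T) *m x
    = k *: (x - vdot a x *: a + vdot b x *: b).
  by rewrite -scalemxAl mulmxDl mulmxBl mul1mx !mulmx_outer.
apply: (@specnorm_attained _ _ _ b); rewrite ?mulr_ge0 //.
  by rewrite Ax !vdotE a_unit b_unit ab_orth ba_orth; ring.
move=> x x_unit; have := bessel2 x.
rewrite Ax !vdotE a_unit b_unit ab_orth ba_orth (vdotC x a) (vdotC x b) x_unit.
by nra.
Qed.

Section Frame2.
Variables (m t : R).

Let A := m%:M + (sin t *: a - cos t *: b) *m (cos t *: a + sin t *: b)^T + b *m a^T.

Lemma vdot_frame2 x :
  vdot (A *m x) (A *m x) =
    m ^+ 2 * vdot x x
    + 2 * m * sin t * (cos t * vdot a x ^+ 2 + 2 * sin t * vdot a x * vdot b x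
                       - cos t * vdot b x ^+ 2)
    + sin t ^+ 2 * (vdot a x ^+ 2 + vdot b x ^+ 2).
Proof.
rewrite /A !mulmxDl mul_scalar_mx !mulmx_outer !vdotE.
rewrite a_unit b_unit ab_orth ba_orth (vdotC x a) (vdotC x b).
set α := vdot a x; set β := vdot b x.
apply/eqP; rewrite -subr_eq0; apply/eqP.
transitivity ((cos t ^+ 2 + sin t ^+ 2 - 1)
              * ((cos t * α + sin t * β) ^+ 2 - α ^+ 2 - 2 * m * α * β)).
  by ring.
by rewrite cos2Dsin2 subrr mul0r.
Qed.

Lemma specnorm_frame2 (k : R) : 0 <= k -> 0 <= m -> 0 <= sin t ->
  specnorm (k *: A) = k * (m + sin t).
Proof.
move=> k_ge0 m_ge0 s_ge0.
have kAx x : vdot (k *: A *m x) (k *: A *m x) = k ^+ 2 * vdot (A *m x) (A *m x).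
  by rewrite -scalemxAl !vdotE; ring.
pose h := t / 2; pose x0 := cos h *: a + sin h *: b.
have ax0 : vdot a x0 = cos h by rewrite !vdotE a_unit ab_orth; ring.
have bx0 : vdot b x0 = sin h by rewrite !vdotE b_unit ba_orth; ring.
have ct : cos t = cos h ^+ 2 - sin h ^+ 2 by rewrite {1}(splitr t) cosD !expr2.
have st : sin t = 2 * sin h * cos h by rewrite {1}(splitr t) sinD; ring.
have x0_unit : vdot x0 x0 = 1.
  rewrite !vdotE a_unit b_unit ab_orth ba_orth.
  by transitivity (cos h ^+ 2 + sin h ^+ 2); [ring | exact: cos2Dsin2].
apply: (@specnorm_attained _ _ _ x0); rewrite ?mulr_ge0 ?addr_ge0 //.
  rewrite kAx vdot_frame2 x0_unit ax0 bx0.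
  have form1 : cos t * cos h ^+ 2 + 2 * sin t * cos h * sin h - cos t * sin h ^+ 2 = 1.
    transitivity (cos t * (cos h ^+ 2 - sin h ^+ 2) + sin t * (2 * sin h * cos h)).
      by ring.
    by rewrite -ct -st -!expr2 cos2Dsin2.
  by rewrite form1 cos2Dsin2; ring.
move=> x x_unit; rewrite kAx vdot_frame2 x_unit exprMn ler_wpM2l ?sqr_ge0 //.
have := bessel2 x; rewrite x_unit.
have := reflection_form_le (cos t) (sin t) (vdot a x) (vdot b x) (cos2Dsin2 t).
have := mulr_ge0 m_ge0 s_ge0.
by nra.
Qed.

End Frame2.
End OrthonormalPair.

Section Angle.
Context {R : realType} {d : nat}.
Implicit Types (v w : 'cV[R]_d).

Lemma vangle_vbar w v : vangle w v = acos (vdot (vbar w) (vbar v)).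
Proof. by rewrite /vangle /vbar !vdotE invfM; congr acos; ring. Qed.

Lemma vangleC w v : vangle v w = vangle w v.
Proof. by rewrite /vangle vdotC (mulrC (vnorm v)). Qed.

Lemma vdot_vbar_itv w v : w != 0 -> v != 0 -> -1 <= vdot (vbar w) (vbar v) <= 1.
Proof.
move=> w0 v0; have := vdot_unit_sqr_le (vbar w) (vbar v) (vdot_vbar w0).
by rewrite vdot_vbar // => c2_le1; apply/andP; split; nra.
Qed.

Lemma cos_vangle w v : w != 0 -> v != 0 -> cos (vangle w v) = vdot (vbar w) (vbar v).
Proof. by move=> w0 v0; rewrite vangle_vbar acosK // in_itv /= vdot_vbar_itv. Qed.

Lemma vnorm_nvec v w : w != 0 -> v != 0 -> vnorm (nvec v w) = sin (vangle v w).
Proof.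
move=> w0 v0; rewrite /vnorm /nvec cos_vangle // (vdotC (vbar v)).
by rewrite vdot_sub_proj ?vdot_vbar // vangle_vbar sin_acos ?vdot_vbar_itv // vdotC.
Qed.

End Angle.

Section AngleFrame.
Context {R : realType} {d : nat}.
Context {w v : 'cV[R]_d}.
Hypotheses (w0 : w != 0) (v0 : v != 0) (sin_gt0 : 0 < sin (vangle w v)).

Lemma nbar_unit : vdot (nbar v w) (nbar v w) = 1.
Proof.
by apply: vdot_vbar; rewrite -vnorm_eq0 vnorm_nvec // (vangleC w v) gt_eqF.
Qed.

Lemma vbar_nbar_orth : vdot (vbar w) (nbar v w) = 0.
Proof.
rewrite /nbar /nvec (vangleC w v) cos_vangle // vdotZr.
by rewrite vdot_proj_orth ?vdot_vbar // mulr0.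
Qed.

Lemma vbar_decomp : vbar v = cos (vangle w v) *: vbar w + sin (vangle w v) *: nbar v w.
Proof.
rewrite /nbar vnorm_nvec // (vangleC w v) (scalerA (sin _)) mulfV ?gt_eqF // scale1r.
by rewrite /nvec (vangleC w v) addrC subrK.
Qed.

Lemma nbar_swap : nbar w v = sin (vangle w v) *: vbar w - cos (vangle w v) *: nbar v w.
Proof.
rewrite {1}/nbar vnorm_nvec // {1}/nvec {1}vbar_decomp.
move: (vbar w) (nbar v w) => a b; apply/matrixP => i j; rewrite !mxE.
rewrite -[X in X - _]mul1r -(cos2Dsin2 (vangle w v)).
by field; rewrite gt_eqF.
Qed.

End AngleFrame.

Theorem lemma9 (R : realType) (d : nat) (w v : 'cV[R]_d) :
  w != 0 -> v != 0 -> 0 < vangle w v < pi ->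
  specnorm (h1 w v) = sin (vangle w v) * vnorm v / (pi * vnorm w) /\
  specnorm (h2 w v) = (2 * pi)^-1 * (pi - vangle w v + sin (vangle w v)).
Proof.
move=> w0 v0 /andP[angle_gt0 angle_ltpi].
have sin_gt0 : 0 < sin (vangle w v) by rewrite sin_gt0_pi ?angle_gt0.
have pi_gt0 := pi_gt0 R; have w_gt0 := vnorm_gt0 w0; have v_gt0 := vnorm_gt0 v0.
have a_unit := vdot_vbar w0; have b_unit := nbar_unit w0 v0 sin_gt0.
have ab_orth := vbar_nbar_orth w0 v0.
split.
  rewrite /h1 (specnorm_frame1 a_unit b_unit ab_orth); last first.
    by rewrite divr_ge0 ?mulr_ge0 ?ltW.
  (* abstract [pi] so that [field] does not unfold it *)
  move: (pi : R) pi_gt0 => p p_gt0.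
  by field; rewrite !gt_eqF.
rewrite /h2 (nbar_swap w0 v0 sin_gt0) (vbar_decomp w0 v0 sin_gt0).
rewrite (specnorm_frame2 a_unit b_unit ab_orth) ?invr_ge0 ?mulr_ge0 ?subr_ge0 ?ltW //.
Qed.
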